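(* Let $d\geq 2$. If $\rho=\sum_{0\le i\le j<d}p_{ij}\ket{D_{ij}}\bra{D_{ij}}$ is an extremal point of the convex set of separable diagonal symmetric states on $\mathbb{C}^d\otimes\mathbb{C}^d$, then $p_{ij}=2\sqrt{p_{ii}p_{jj}}$ for all $0\le i<j<d$.
   Context: Let $\{\ket{0},\dots,\ket{d-1}\}$ be the computational basis of $\mathbb{C}^d$. Define $\ket{D_{ii}}=\ket{ii}$ and, for $i<j$, $\ket{D_{ij}}=(\ket{ij}+\ket{ji})/\sqrt{2}$. A state $\rho$ on $\mathbb{C}^d\otimes\mathbb{C}^d$ is diagonal symmetric (DS) if $\rho=\sum_{0\le i\le j<d}p_{ij}\ket{D_{ij}}\bra{D_{ij}}$ with $p_{ij}\ge 0$ and $\sum_{i\le j}p_{ij}=1$. A state is separable if it is a convex combination of product states $\rho^A\otimes\rho^B$. An extremal point of a convex set is an element that cannot be written as a nontrivial convex combination of two other elements of the set. *)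

(* real numbers R : realType (MathComp-Analysis),
   complex numbers R[i] (mathcomp-real-closed), tensor product of matrices
   A *t B (mathcomp-real-closed mxtens, Kronecker product, row-major index
   i*n+j for the basis vector |i> (x) |j>). *)
From HB Require Import structures.
From mathcomp Require Import all_boot all_order all_algebra.
From mathcomp Require Import all_reals.
From mathcomp.real_closed Require Import complex mxtens.
Set Implicit Arguments. Unset Strict Implicit. Unset Printing Implicit Defensive.
Import Order.TTheory GRing.Theory Num.Theory.
Local Open Scope ring_scope.
Local Open Scope complex_scope.

Definition adjmx (R : rcfType) (m n : nat) (A : 'M[R[i]]_(m, n)) : 'M[R[i]]_(n, m) :=
  (map_mx Num.conj A)^T.

Definition psd (R : rcfType) (n : nat) (A : 'M[R[i]]_n) : Prop :=
  adjmx A = A /\ forall v : 'cV[R[i]]_n, 0 <= (adjmx v *m A *m v) 0 0.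

Definition density (R : rcfType) (n : nat) (A : 'M[R[i]]_n) : Prop :=
  psd A /\ \tr A = 1.

Definition ket (R : rcfType) (d : nat) (k : 'I_d) : 'cV[R[i]]_d := delta_mx k 0.

Definition proj (R : rcfType) (n : nat) (v : 'cV[R[i]]_n) : 'M[R[i]]_n := v *m adjmx v.

Definition Dket (R : rcfType) (d : nat) (a b : 'I_d) : 'cV[R[i]]_(d * d) :=
  if a == b then ket R a *t ket R b
  else ((Num.sqrt (2 : R))^-1)%:C *: (ket R a *t ket R b + ket R b *t ket R a).

Definition DSmx (R : rcfType) (d : nat) (p : 'I_d -> 'I_d -> R) : 'M[R[i]]_(d * d) :=
  \sum_(a < d) \sum_(b < d | (a <= b)%N) (p a b)%:C *: proj (@Dket R d a b).

Definition DS_coeffs (R : rcfType) (d : nat) (p : 'I_d -> 'I_d -> R) : Prop :=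
  (forall a b : 'I_d, (a <= b)%N -> 0 <= p a b) /\
  \sum_(a < d) \sum_(b < d | (a <= b)%N) p a b = 1.

Definition is_DS (R : rcfType) (d : nat) (rho : 'M[R[i]]_(d * d)) : Prop :=
  exists p : 'I_d -> 'I_d -> R, DS_coeffs p /\ rho = DSmx p.

Definition separable (R : rcfType) (d : nat) (rho : 'M[R[i]]_(d * d)) : Prop :=
  exists (n : nat) (w : 'I_n -> R) (A B : 'I_n -> 'M[R[i]]_d),
    (forall k, 0 <= w k) /\ \sum_(k < n) w k = 1 /\
    (forall k, density (A k) /\ density (B k)) /\
    rho = \sum_(k < n) (w k)%:C *: (A k *t B k).

Definition sepDS (R : rcfType) (d : nat) (rho : 'M[R[i]]_(d * d)) : Prop :=
  is_DS rho /\ separable rho.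

Definition extremal (R : rcfType) (n : nat) (S : 'M[R[i]]_n -> Prop) (x : 'M[R[i]]_n) : Prop :=
  S x /\
  forall (y z : 'M[R[i]]_n) (t : R), S y -> S z -> 0 < t < 1 ->
    x = t%:C *: y + (1 - t)%:C *: z -> y = x /\ z = x.

From HB Require Import structures.
From mathcomp Require Import all_boot all_order all_algebra.
From mathcomp Require Import all_reals.
From mathcomp.real_closed Require Import complex mxtens.
From mathcomp Require Import ring lra.
Import Order.TTheory GRing.Theory Num.Theory.
Set Implicit Arguments. Unset Strict Implicit. Unset Printing Implicit Defensive.
Local Open Scope ring_scope.
Local Open Scope complex_scope.
Local Notation Re := complex.Re.
Local Notation Im := complex.Im.

(* Write an extremal separable DS state as rho = sum_k w_k A_k (x) B_k with
   states A_k, B_k.  The antisymmetric vector |ij> - |ji> has expectation zero in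
   any DS state, and nonnegative expectation in a product of states, by the
   2 x 2 minor inequalities |A_ij|^2 <= A_ii A_jj and AM-GM; so every term with
   w_k > 0 attains equality, which forces
   (A_k)_ij (B_k)_ji = (A_k)_ii (B_k)_jj = (A_k)_jj (B_k)_ii.
   Averaging over the conjugations by U (x) U, U = diag(i^(s_0), ..., i^(s_(d-1))),
   fixes rho and sends such a product to the DS state with weights
   p_ii = a_i b_i and p_ij = 2 a_i b_j, where a, b are the diagonals of A_k, B_k;
   being an average of product states, it is still separable.  Extremality then
   makes rho equal to one of these states, and for it
   p_ij^2 = 4 a_i b_j a_j b_i = 4 p_ii p_jj. *)

Lemma conjE (R : rcfType) (z : R[i]) : Num.conj z = z^*.
Proof. by case: z. Qed.

Lemma conj_real (R : rcfType) (x : R) : Num.conj x%:C = x%:C.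
Proof. by rewrite conjE conjc_real. Qed.

Lemma ge0_complex_real (R : rcfType) (z : R[i]) : 0 <= z -> z = (Re z)%:C /\ 0 <= Re z.
Proof. by case: z => a b; rewrite lecE /= => /andP[/eqP ->]. Qed.

Definition same_pair d (i j k l : 'I_d) : bool :=
  ((i == k) && (j == l)) || ((i == l) && (j == k)).

Lemma same_pairC d (i j k l : 'I_d) : same_pair j i k l = same_pair i j k l.
Proof. by rewrite /same_pair orbC andbC [(j == k) && _]andbC. Qed.

Lemma same_pairCr d (i j k l : 'I_d) : same_pair i j l k = same_pair i j k l.
Proof. by rewrite /same_pair orbC. Qed.

Definition symp (T : Type) d (p : 'I_d -> 'I_d -> T) (i j : 'I_d) : T :=
  if (i <= j)%N then p i j else p j i.

Lemma symp_sym (T : Type) d (p : 'I_d -> 'I_d -> T) (i j : 'I_d) : symp p j i = symp p i j.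
Proof.
rewrite /symp; case: (leqP i j) => [le_ij|/ltnW ->] //.
case: leqP => // le_ji; suff -> : i = j by [].
by apply: val_inj; apply/eqP; rewrite eqn_leq le_ij le_ji.
Qed.

Lemma sum_upper_same_pair (V : nmodType) d (F : 'I_d -> 'I_d -> V) (i j : 'I_d) :
  \sum_(a < d) \sum_(b < d | (a <= b)%N) (if same_pair a b i j then F a b else 0)
  = symp F i j.
Proof.
wlog le_ij : i j / (i <= j)%N.
  move=> H; case: (leqP i j) => [/H //|/ltnW/H]; rewrite symp_sym => <-.
  by apply: eq_bigr => a _; apply: eq_bigr => b _; rewrite same_pairCr.
rewrite pair_big_dep /= -big_mkcondr /= (big_pred1 (i, j)) ?/symp ?le_ij // => -[a b] /=.
rewrite /same_pair xpair_eqE.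
apply/andP/andP => [[le_ab /orP[/andP//|/andP[/eqP aj /eqP bi]]] | [/eqP-> /eqP->]].
  have ij : i = j by apply: val_inj; apply/eqP; rewrite eqn_leq le_ij -aj -bi.
  by rewrite aj bi ij.
by rewrite le_ij !eqxx.
Qed.

Lemma same_pair_count d (i j k l : 'I_d) :
  [forall m, (m == i) + (m == j) == (m == k) + (m == l)]%N = same_pair i j k l.
Proof.
apply/forallP/idP => [count_eq|]; last first.
  by case/orP=> /andP[/eqP<- /eqP<-] m //; rewrite addnC.
have [ik|ik] := eqVneq i k.
  subst k; move: (count_eq j); rewrite eqxx eqn_add2l /same_pair !eqxx /=.
  by case: (j == l).
have /eqP il : i == l by move: (count_eq i); rewrite eqxx (negbTE ik); case: (i == l).
subst l; move: (count_eq j); rewrite eqxx [X in _ == X]addnC eqn_add2l /same_pair eqxx.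
by case: (j == k); rewrite ?orbT.
Qed.

(** * Diagonal symmetric matrices *)

Definition Dket_coef (R : rcfType) d (a b : 'I_d) : R := if a == b then 1 else (Num.sqrt 2)^-1.

Lemma Dket_coefC (R : rcfType) d (a b : 'I_d) : Dket_coef R b a = Dket_coef R a b.
Proof. by rewrite /Dket_coef eq_sym. Qed.

Lemma Dket_coef_sqr (R : rcfType) d (a b : 'I_d) :
  Dket_coef R a b ^+ 2 = if a == b then 1 else 2^-1.
Proof. by rewrite /Dket_coef; case: ifP; rewrite ?expr1n // exprVn sqr_sqrtr ?ler0n. Qed.

Lemma ket_tens_entry (R : rcfType) d (a b i j : 'I_d) :
  (ket R a *t ket R b) (mxtens_index (i, j)) 0 = ((i == a) && (j == b))%:R.
Proof. by rewrite mxE mxtens_indexK /= !mxE -natrM mulnb !andbT. Qed.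

Lemma Dket_entry (R : rcfType) d (a b i j : 'I_d) :
  Dket R a b (mxtens_index (i, j)) 0 = (if same_pair a b i j then Dket_coef R a b else 0)%:C.
Proof.
rewrite /Dket /Dket_coef /same_pair; case: (eqVneq a b) => [<-|nab].
  rewrite ket_tens_entry (eq_sym a i) (eq_sym a j) [X in _ || X]andbC orbb.
  by case: (_ && _); rewrite ?rmorph1 ?rmorph0.
rewrite 2!mxE !ket_tens_entry (eq_sym a i) (eq_sym b j) (eq_sym a j) (eq_sym b i).
have [/andP[/eqP-> /eqP->]|_] := boolP ((i == a) && (j == b)).
  by rewrite (negbTE nab) addr0 mulr1.
by rewrite /= add0r andbC; case: (_ && _); rewrite ?mulr1 ?mulr0.
Qed.

Lemma proj_entry (R : rcfType) n (v : 'cV[R[i]]_n) r c : proj v r c = v r 0 * Num.conj (v c 0).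
Proof. by rewrite /proj /adjmx mxE big_ord1 !mxE. Qed.

Lemma DSmx_entry (R : rcfType) d (p : 'I_d -> 'I_d -> R) (i j k l : 'I_d) :
  DSmx p (mxtens_index (i, j)) (mxtens_index (k, l)) =
  (if same_pair i j k l then symp p i j * Dket_coef R i j ^+ 2 else 0)%:C.
Proof.
pose F a b := if same_pair a b k l then p a b * Dket_coef R a b ^+ 2 else 0.
have -> : DSmx p (mxtens_index (i, j)) (mxtens_index (k, l)) =
    (\sum_(a < d) \sum_(b < d | (a <= b)%N) if same_pair a b i j then F a b else 0)%:C.
  rewrite /DSmx summxE rmorph_sum; apply: eq_bigr => a _.
  rewrite summxE rmorph_sum; apply: eq_bigr => b _.
  rewrite mxE proj_entry !Dket_entry conj_real -!rmorphM /F.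
  by case: ifP => _; case: ifP => _; rewrite ?mulr0 ?mul0r ?mulr0 ?expr2.
rewrite (sum_upper_same_pair F i j) /symp /F same_pairC Dket_coefC.
by case: ifP.
Qed.

Lemma DSmx_sum (R : rcfType) d n (v : 'I_n -> R) (q : 'I_n -> 'I_d -> 'I_d -> R) :
  \sum_(k < n) (v k)%:C *: DSmx (q k) = DSmx (fun a b => \sum_(k < n) v k * q k a b).
Proof.
rewrite /DSmx.
under [RHS]eq_bigr => a _ do under eq_bigr => b _ do rewrite rmorph_sum scaler_suml.
under [RHS]eq_bigr => a _ do rewrite exchange_big.
rewrite [RHS]exchange_big; apply: eq_bigr => k _.
rewrite scaler_sumr; apply: eq_bigr => a _; rewrite scaler_sumr; apply: eq_bigr => b _.
by rewrite scalerA -rmorphM.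
Qed.

(* The factor 2 compensates the entries 1/2 of |D_ij><D_ij| for i < j. *)
Definition upper_fold (R : pzRingType) d (g : 'I_d -> 'I_d -> R) (a b : 'I_d) : R :=
  if a == b then g a b else 2 * g a b.

Lemma DSmx_upper_fold (R : rcfType) d (g : 'I_d -> 'I_d -> R) (i j k l : 'I_d) :
  (forall a b, g a b = g b a) ->
  DSmx (upper_fold g) (mxtens_index (i, j)) (mxtens_index (k, l)) =
  (if same_pair i j k l then g i j else 0)%:C.
Proof.
move=> g_sym; rewrite DSmx_entry Dket_coef_sqr /symp /upper_fold eq_sym.
case: leqP => _; rewrite 1?[g j i]g_sym; case: ifP => // _;
  by case: eqP => _; rewrite ?mulr1 // mulrC mulKf ?pnatr_eq0.
Qed.

Lemma sum_upper_fold (R : pzRingType) d (g : 'I_d -> 'I_d -> R) :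
  (forall a b, g a b = g b a) ->
  \sum_(a < d) \sum_(b < d | (a <= b)%N) upper_fold g a b = \sum_(a < d) \sum_(b < d) g a b.
Proof.
move=> g_sym.
have fold_split a b : upper_fold g a b = g a b + (if a == b then 0 else g a b).
  by rewrite /upper_fold; case: ifP; rewrite ?addr0 // mulr_natl mulr2n.
have strict (a : 'I_d) :
    \sum_(b < d | (a <= b)%N) (if a == b then 0 else g a b) = \sum_(b < d | (a < b)%N) g a b.
  rewrite big_mkcond [RHS]big_mkcond; apply: eq_bigr => b _.
  by case: (eqVneq a b) => [->|nab]; rewrite ?ltnn ?if_same // ltn_neqAle val_eqE nab.
have lower_upper : \sum_(a < d) \sum_(b < d | ~~ (a <= b)%N) g a b
                   = \sum_(a < d) \sum_(b < d | (a < b)%N) g a b.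
  rewrite (exchange_big_dep xpredT) //=; apply: eq_bigr => a _.
  by apply: eq_big => [b|b _]; rewrite ?ltnNge // g_sym.
under eq_bigr => a _ do rewrite (eq_bigr _ (fun b _ => fold_split a b)) big_split /= strict.
rewrite big_split /= -lower_upper -big_split /=.
by apply: eq_bigr => a _; rewrite [RHS](bigID (fun b : 'I_d => (a <= b)%N)).
Qed.

Lemma DSmx_inj (R : rcfType) d (p q : 'I_d -> 'I_d -> R) :
  DSmx p = DSmx q -> forall a b : 'I_d, (a <= b)%N -> p a b = q a b.
Proof.
move=> /matrixP pq a b; have := pq (mxtens_index (a, b)) (mxtens_index (a, b)).
rewrite !DSmx_entry /same_pair !eqxx /= /symp => /complexI + ab; rewrite ab.
by apply: mulIf; rewrite Dket_coef_sqr; case: ifP; rewrite ?oner_eq0 ?invr_eq0 ?pnatr_eq0.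
Qed.

(** * Positive semidefinite matrices *)

Lemma sum_mul_delta (R : pzSemiRingType) n (F : 'I_n -> R) (i : 'I_n) :
  \sum_(c < n) F c * (c == i)%:R = F i.
Proof. by rewrite (bigD1 i) //= eqxx mulr1 big1 ?addr0 // => c /negbTE->; rewrite mulr0. Qed.

Lemma quad_form_entry (R : rcfType) n (A : 'M[R[i]]_n) (v : 'cV[R[i]]_n) :
  (adjmx v *m A *m v) 0 0 = \sum_r Num.conj (v r 0) * \sum_c A r c * v c 0.
Proof.
rewrite -mulmxA mxE; apply: eq_bigr => r _.
by rewrite !mxE; congr (_ * _); apply: eq_bigr => c _; rewrite mxE.
Qed.

Section PositiveSemidefinite.
Variables (R : rcfType) (n : nat) (A : 'M[R[i]]_n).
Hypothesis psdA : psd A.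

Lemma psd_herm i j : A j i = Num.conj (A i j).
Proof. by case: psdA => herm _; rewrite -{1}herm /adjmx !mxE. Qed.

Lemma psd_quad2 i j (x y : R[i]) :
  0 <= Num.conj x * (A i i * x + A i j * y) + Num.conj y * (A j i * x + A j j * y).
Proof.
case: psdA => _ /(_ (x *: ket R i + y *: ket R j)); rewrite quad_form_entry.
have vE r : (x *: ket R i + y *: ket R j) r 0 = x * (r == i)%:R + y * (r == j)%:R.
  by rewrite !mxE !eqxx !andbT.
under eq_bigr => r _ do under eq_bigr => c _ do rewrite vE mulrDr !mulrA.
under eq_bigr => r _ do rewrite big_split /= !sum_mul_delta.
under eq_bigr => r _ do rewrite vE rmorphD !rmorphM !rmorph_nat mulrDl
  [_ * (r == i)%:R * _]mulrAC [_ * (r == j)%:R * _]mulrAC.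
by rewrite big_split /= !sum_mul_delta.
Qed.

Lemma psd_diag_ge0 i : 0 <= A i i.
Proof.
have := psd_quad2 i i 1 0.
by rewrite ?(rmorph1, rmorph0, mulr1, mulr0, mul0r, mul1r, addr0).
Qed.

Lemma psd_diag_real i : A i i = (Re (A i i))%:C.
Proof. by have [] := ge0_complex_real (psd_diag_ge0 i). Qed.

Lemma psd_Re_diag_ge0 i : 0 <= Re (A i i).
Proof. by have [] := ge0_complex_real (psd_diag_ge0 i). Qed.

Lemma psd_offdiag_le i j :
  Re (A i j) ^+ 2 + Im (A i j) ^+ 2 <= Re (A i i) * Re (A j j).
Proof.
have quad r s := psd_quad2 i j r%:C (- s%:C * Num.conj (A i j)).
move: quad; rewrite (psd_herm i j) (psd_diag_real i) (psd_diag_real j).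
have := psd_Re_diag_ge0 i; have := psd_Re_diag_ge0 j.
move: (Re (A i i)) (Re (A j j)) (A i j) => a1 a2 [u w] a2_ge0 a1_ge0 quad /=.
set N := u ^+ 2 + w ^+ 2.
have {}quad r s : 0 <= r ^+ 2 * a1 - 2 * r * s * N + s ^+ 2 * N * a2.
  have := quad r s; rewrite lecE /= => /andP[_ h]; apply: le_trans h _.
  by rewrite le_eqVlt; apply/orP; left; apply/eqP; rewrite /N; ring.
have N_ge0 : 0 <= N by rewrite addr_ge0 ?sqr_ge0.
have [a1_0|a1_neq0] := eqVneq a1 0.
  by have := quad (a2 + 1) 1; rewrite a1_0 mul0r; nra.
have [->|N_neq0] := eqVneq N 0; first by rewrite mulr_ge0.
have aN_gt0 : 0 < a1 * N by rewrite mulr_gt0 // lt_def ?a1_neq0 ?N_neq0.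
rewrite -subr_ge0 -(pmulr_rge0 _ aN_gt0).
have -> : a1 * N * (a1 * a2 - N) = N ^+ 2 * a1 - 2 * N * a1 * N + a1 ^+ 2 * N * a2 by ring.
exact: quad.
Qed.

End PositiveSemidefinite.

Lemma adjmxK (R : rcfType) m n (X : 'M[R[i]]_(m, n)) : adjmx (adjmx X) = X.
Proof. by apply/matrixP => i j; rewrite /adjmx !mxE conjCK. Qed.

Lemma adjmxM (R : rcfType) m n p (X : 'M[R[i]]_(m, n)) (Y : 'M[R[i]]_(n, p)) :
  adjmx (X *m Y) = adjmx Y *m adjmx X.
Proof. by rewrite /adjmx map_mxM trmx_mul. Qed.

Lemma adjmx_diag (R : rcfType) n (r : 'rV[R[i]]_n) :
  adjmx (diag_mx r) = diag_mx (map_mx Num.conj r).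
Proof.
apply/matrixP => i j; rewrite /adjmx !mxE eq_sym.
by case: (eqVneq j i) => [->|_]; rewrite ?mulr1n ?mulr0n ?rmorph0.
Qed.

Lemma density_unitary_conj (R : rcfType) n (U A : 'M[R[i]]_n) :
  adjmx U *m U = 1%:M -> density A -> density (U *m A *m adjmx U).
Proof.
move=> unitU [[hermA A_ge0] trA]; split; first split.
- by rewrite !adjmxM adjmxK hermA mulmxA.
- by move=> v; have := A_ge0 (adjmx U *m v); rewrite adjmxM adjmxK !mulmxA.
- by rewrite mxtrace_mulC mulmxA unitU mul1mx.
Qed.

(** * Product states in a DS decomposition *)

Lemma amgm_le (R : realFieldType) (x y u v : R) :
  0 <= x -> 0 <= y -> u ^+ 2 + v ^+ 2 <= x * y -> 2 * u <= x + y.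
Proof.
move=> x_ge0 y_ge0 uv_le; have [u_le0|/ltW u_ge0] := leP u 0; first lra.
rewrite -ler_sqr ?nnegrE ?addr_ge0 ?mulr_ge0 // -subr_ge0.
have -> : (x + y) ^+ 2 - (2 * u) ^+ 2 =
    (x - y) ^+ 2 + 4 * (x * y - (u ^+ 2 + v ^+ 2)) + 4 * v ^+ 2 by ring.
by have := sqr_ge0 (x - y); have := sqr_ge0 v; lra.
Qed.

Lemma amgm_eq (R : realFieldType) (x y u v : R) :
  0 <= x -> 0 <= y -> u ^+ 2 + v ^+ 2 <= x * y -> 2 * u = x + y ->
  [/\ x = y, u = x & v = 0].
Proof.
move=> x_ge0 y_ge0 uv_le uE.
have yE : y = 2 * u - x by lra.
have sq_le0 : (x - y) ^+ 2 + 4 * v ^+ 2 <= 0.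
  have -> : (x - y) ^+ 2 + 4 * v ^+ 2 = 4 * (u ^+ 2 + v ^+ 2 - x * y) by rewrite yE; ring.
  by rewrite pmulr_rle0 // subr_le0.
have := sqr_ge0 (x - y); have := sqr_ge0 v => v2_ge0 xy2_ge0.
have v0 : v = 0 by apply/eqP; rewrite -sqrf_eq0 eq_le sqr_ge0 andbT; lra.
have x_eq_y : x = y by apply/eqP; rewrite -subr_eq0 -sqrf_eq0 eq_le sqr_ge0 andbT; lra.
by split => //; lra.
Qed.

(* <psi|X|psi> for psi = |ij> - |ji>. *)
Definition antisym_quad (R : rcfType) d (X : 'M[R[i]]_(d * d)) (i j : 'I_d) : R[i] :=
  X (mxtens_index (i, j)) (mxtens_index (i, j)) + X (mxtens_index (j, i)) (mxtens_index (j, i))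
  - X (mxtens_index (i, j)) (mxtens_index (j, i)) - X (mxtens_index (j, i)) (mxtens_index (i, j)).

Lemma antisym_quad_sum (R : rcfType) d n (c : 'I_n -> R[i]) (X : 'I_n -> 'M[R[i]]_(d * d)) i j :
  antisym_quad (\sum_(k < n) c k *: X k) i j = \sum_(k < n) c k * antisym_quad (X k) i j.
Proof.
rewrite /antisym_quad !summxE -big_split -!sumrB /=; apply: eq_bigr => k _.
by rewrite !mxE; ring.
Qed.

Lemma antisym_quad_DSmx (R : rcfType) d (p : 'I_d -> 'I_d -> R) i j :
  antisym_quad (DSmx p) i j = 0.
Proof.
rewrite /antisym_quad !DSmx_entry /same_pair !eqxx !orbT (symp_sym p j i) (Dket_coefC R j i).
by rewrite addrK subrr.
Qed.

Lemma antisym_quad_tens (R : rcfType) d (A B : 'M[R[i]]_d) (i j : 'I_d) : psd A -> psd B ->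
  0 <= antisym_quad (A *t B) i j /\
  (antisym_quad (A *t B) i j = 0 ->
     A i j * B j i = A i i * B j j /\ A j j * B i i = A i i * B j j).
Proof.
move=> psdA psdB.
set x := Re (A i i) * Re (B j j); set y := Re (A j j) * Re (B i i); set z := A i j * B j i.
have xE : A i i * B j j = x%:C by rewrite (psd_diag_real psdA) (psd_diag_real psdB) rmorphM.
have yE : A j j * B i i = y%:C by rewrite (psd_diag_real psdA) (psd_diag_real psdB) rmorphM.
have quadE : antisym_quad (A *t B) i j = (x + y - 2 * Re z)%:C.
  rewrite /antisym_quad !tensmxE xE yE (psd_herm psdA i j) (psd_herm psdB j i) !conjE -rmorphM -/z.
  by rewrite -addrA -opprD addcJ rmorphB rmorphD (rmorphM _ 2) rmorph_nat.
have z_le : Re z ^+ 2 + Im z ^+ 2 <= x * y.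
  have -> : Re z ^+ 2 + Im z ^+ 2 =
      (Re (A i j) ^+ 2 + Im (A i j) ^+ 2) * (Re (B j i) ^+ 2 + Im (B j i) ^+ 2).
    by rewrite /z; case: (A i j) => a b; case: (B j i) => c e /=; ring.
  have -> : x * y = (Re (A i i) * Re (A j j)) * (Re (B j j) * Re (B i i)).
    by rewrite /x /y; ring.
  by rewrite ler_pM ?addr_ge0 ?sqr_ge0 ?psd_offdiag_le.
have x_ge0 : 0 <= x by rewrite mulr_ge0 ?psd_Re_diag_ge0.
have y_ge0 : 0 <= y by rewrite mulr_ge0 ?psd_Re_diag_ge0.
rewrite quadE ler0c subr_ge0 (amgm_le x_ge0 y_ge0 z_le).
split => // /(congr1 (@complex.Re R)) /= /eqP.
rewrite subr_eq0 eq_sym => /eqP /(amgm_eq x_ge0 y_ge0 z_le) [xy Rez Imz].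
by rewrite xE yE -xy [z]complexE Rez Imz rmorph0 mulr0 addr0.
Qed.

Definition DS_compatible (R : rcfType) d (A B : 'M[R[i]]_d) : Prop :=
  forall i j : 'I_d, A i j * B j i = A i i * B j j /\ A j j * B i i = A i i * B j j.

Lemma sep_DS_compatible (R : rcfType) d n (p : 'I_d -> 'I_d -> R) (w : 'I_n -> R)
    (A B : 'I_n -> 'M[R[i]]_d) :
  DSmx p = \sum_(k < n) (w k)%:C *: (A k *t B k) ->
  (forall k, 0 <= w k) -> (forall k, density (A k) /\ density (B k)) ->
  forall k, 0 < w k -> DS_compatible (A k) (B k).
Proof.
move=> rhoE w_ge0 AB k wk i j.
have psdAB l : psd (A l) /\ psd (B l) by have [[? _] [? _]] := AB l.
have term_ge0 l : 0 <= (w l)%:C * antisym_quad (A l *t B l) i j.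
  have [psdA psdB] := psdAB l.
  by rewrite mulr_ge0 ?ler0c //; case: (antisym_quad_tens i j psdA psdB).
have sum0 : \sum_(l < n) (w l)%:C * antisym_quad (A l *t B l) i j = 0.
  by rewrite -antisym_quad_sum -rhoE antisym_quad_DSmx.
have [psdA psdB] := psdAB k; apply: (antisym_quad_tens i j psdA psdB).2.
have /eqP := psumr_eq0P (fun l _ => term_ge0 l) sum0 (i := k) isT.
by rewrite mulf_eq0 fmorph_eq0 (gt_eqF wk) => /eqP.
Qed.

Definition diag_prod (R : rcfType) d (A B : 'M[R[i]]_d) (a b : 'I_d) : R :=
  Re (A a a) * Re (B b b).

Section DiagProd.
Variables (R : rcfType) (d : nat) (A B : 'M[R[i]]_d).
Hypotheses (psdA : psd A) (psdB : psd B).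

Lemma diag_prodE a b : A a a * B b b = (diag_prod A B a b)%:C.
Proof. by rewrite (psd_diag_real psdA) (psd_diag_real psdB) rmorphM. Qed.

Lemma diag_prod_sym a b : DS_compatible A B -> diag_prod A B a b = diag_prod A B b a.
Proof. by move=> /(_ a b) [_ AB]; apply: complexI; rewrite -!diag_prodE AB. Qed.

Lemma diag_prod_ge0 a b : 0 <= diag_prod A B a b.
Proof. by rewrite mulr_ge0 ?psd_Re_diag_ge0. Qed.

End DiagProd.

Lemma density_sum_Re_diag (R : rcfType) d (A : 'M[R[i]]_d) : density A -> \sum_a Re (A a a) = 1.
Proof.
case=> psdA trA; apply: complexI; rewrite rmorph1 rmorph_sum -trA.
by apply: eq_bigr => a _; apply/esym/psd_diag_real.
Qed.

Lemma upper_fold_ge0 (R : numDomainType) d (g : 'I_d -> 'I_d -> R) (a b : 'I_d) :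
  (forall a b, 0 <= g a b) -> 0 <= upper_fold g a b.
Proof. by move=> g_ge0; rewrite /upper_fold; case: ifP => _; rewrite ?mulr_ge0. Qed.

Lemma sum_upper_fold_diag_prod (R : rcfType) d (A B : 'M[R[i]]_d) :
  density A -> density B -> DS_compatible A B ->
  \sum_(a < d) \sum_(b < d | (a <= b)%N) upper_fold (diag_prod A B) a b = 1.
Proof.
move=> densA densB compat; have [[psdA _] [psdB _]] := (densA, densB).
rewrite (sum_upper_fold (fun a b => diag_prod_sym psdA psdB a b compat)).
by rewrite -big_distrlr /= !density_sum_Re_diag ?mulr1.
Qed.

Lemma diag_prod_sqr (R : rcfType) d (A B : 'M[R[i]]_d) (a b : 'I_d) :
  psd A -> psd B -> DS_compatible A B ->
  diag_prod A B a a * diag_prod A B b b = diag_prod A B a b ^+ 2.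
Proof.
move=> psdA psdB compat; rewrite expr2 {2}(diag_prod_sym psdA psdB a b compat).
by rewrite /diag_prod; ring.
Qed.

(** * Twirling *)

Definition twirl (R : rcfType) d (X : 'M[R[i]]_(d * d)) : 'M[R[i]]_(d * d) :=
  \matrix_(r, c) if same_pair (mxtens_unindex r).1 (mxtens_unindex r).2
                              (mxtens_unindex c).1 (mxtens_unindex c).2 then X r c else 0.

Lemma twirl_entry (R : rcfType) d (X : 'M[R[i]]_(d * d)) (i j k l : 'I_d) :
  twirl X (mxtens_index (i, j)) (mxtens_index (k, l)) =
  if same_pair i j k l then X (mxtens_index (i, j)) (mxtens_index (k, l)) else 0.
Proof. by rewrite mxE !mxtens_indexK. Qed.

Lemma tens_matrixP (T : Type) d (X Y : 'M[T]_(d * d)) :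
  (forall i j k l : 'I_d, X (mxtens_index (i, j)) (mxtens_index (k, l)) =
                          Y (mxtens_index (i, j)) (mxtens_index (k, l))) -> X = Y.
Proof.
move=> XY; apply/matrixP => r c.
by case: (mxtens_indexP r) => i j; case: (mxtens_indexP c) => k l; apply: XY.
Qed.

Lemma twirl_DSmx (R : rcfType) d (p : 'I_d -> 'I_d -> R) : twirl (DSmx p) = DSmx p.
Proof.
apply: tens_matrixP => i j k l; rewrite twirl_entry.
by case: ifP => // not_pair; rewrite DSmx_entry not_pair rmorph0.
Qed.

Lemma twirl_sum (R : rcfType) d n (c : 'I_n -> R[i]) (X : 'I_n -> 'M[R[i]]_(d * d)) :
  twirl (\sum_(k < n) c k *: X k) = \sum_(k < n) c k *: twirl (X k).
Proof.
apply/matrixP => r s; rewrite mxE !summxE; case: ifP => pair_rs.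
  by apply: eq_bigr => k _; rewrite !mxE pair_rs.
by rewrite big1 // => k _; rewrite !mxE pair_rs mulr0.
Qed.

Lemma twirl_tens (R : rcfType) d (A B : 'M[R[i]]_d) : psd A -> psd B -> DS_compatible A B ->
  twirl (A *t B) = DSmx (upper_fold (diag_prod A B)).
Proof.
move=> psdA psdB compat; apply: tens_matrixP => i j k l.
rewrite twirl_entry DSmx_upper_fold => [|a b]; last exact: diag_prod_sym.
case: ifP => // /orP[/andP[/eqP<- /eqP<-]|/andP[/eqP<- /eqP<-]]; rewrite tensmxE.
  exact: diag_prodE.
by have [-> _] := compat i j; apply: diag_prodE.
Qed.

Lemma conj_i (R : rcfType) : Num.conj ('i : R[i]) = 'i ^+ 3.
Proof.
rewrite exprS sqr_i mulrN1 conjE.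
by apply/eqP; rewrite eq_complex /= oppr0 !eqxx.
Qed.

Lemma expi4 (R : rcfType) : ('i : R[i]) ^+ 4 = 1.
Proof. by rewrite (exprM _ 2 2) sqr_i sqrrN expr1n. Qed.

Lemma expi_eq1 (R : rcfType) n : (('i : R[i]) ^+ n == 1) = (4 %| n)%N.
Proof.
rewrite {1}(divn_eq n 4) exprD mulnC exprM expi4 expr1n mul1r /dvdn.
have : (n %% 4 < 4)%N by rewrite ltn_mod.
case: (n %% 4)%N => [|[|[|[|//]]]] _; rewrite ?expr0 ?eqxx //.
- by rewrite expr1 eq_complex /= oner_eq0 andbF.
- by rewrite sqr_i eq_complex /= lt_eqF //; lra.
- by rewrite exprS sqr_i mulrN1 eq_complex /= oppr_eq0 oner_eq0 andbF.
Qed.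

Lemma conj_expi_mul (R : rcfType) k : Num.conj (('i : R[i]) ^+ k) * 'i ^+ k = 1.
Proof.
by rewrite rmorphXn /= conj_i -exprM -exprD addnC -mulSn exprM expi4 expr1n.
Qed.

Lemma sum_expr_unity (F : idomainType) (z : F) n : z ^+ n = 1 ->
  \sum_(t < n) z ^+ t = if z == 1 then n%:R else 0.
Proof.
move=> zn; case: eqP => [->|/eqP z_neq1].
  by under eq_bigr do rewrite expr1n; rewrite sumr_const card_ord.
have := subrX1 z n; rewrite zn subrr => /esym/eqP.
by rewrite mulf_eq0 subr_eq0 (negbTE z_neq1) => /eqP.
Qed.

Lemma phase_char (R : rcfType) (a b : nat) : (a <= 2)%N -> (b <= 2)%N ->
  \sum_(t < 4) (('i : R[i]) ^+ t) ^+ a * Num.conj ('i ^+ t) ^+ b = if a == b then 4%:R else 0.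
Proof.
(* a + 3 b = a - b (mod 4) with |a - b| <= 2: fourth roots of unity separate
   a = b, whereas the signs +-1 alone would not. *)
move=> a_le2 b_le2.
have -> : \sum_(t < 4) (('i : R[i]) ^+ t) ^+ a * Num.conj ('i ^+ t) ^+ b
          = \sum_(t < 4) ('i ^+ (a + 3 * b)) ^+ t.
  apply: eq_bigr => t _; rewrite rmorphXn /= conj_i -!exprM -exprD.
  by congr (_ ^+ _); ring.
rewrite sum_expr_unity ?expi_eq1; last by rewrite -exprM mulnC exprM expi4 expr1n.
by case: a b a_le2 b_le2 => [|[|[|?]]] [|[|[|?]]].
Qed.

Lemma prodr_exp_eq1 (R : comPzSemiRingType) n (f : 'I_n -> R) (i : 'I_n) :
  \prod_(m < n) f m ^+ (m == i) = f i.
Proof. by rewrite (bigD1 i) //= eqxx expr1 big1 ?mulr1 // => m /negbTE->. Qed.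

Lemma sum_phases (R : rcfType) d (i j k l : 'I_d) :
  \sum_(s : {ffun 'I_d -> 'I_4})
     'i ^+ s i * 'i ^+ s j * Num.conj ('i ^+ s k) * Num.conj ('i ^+ s l)
  = if same_pair i j k l then (4 ^ d)%:R else 0 :> R[i].
Proof.
pose a (m : 'I_d) := ((m == i) + (m == j))%N; pose b (m : 'I_d) := ((m == k) + (m == l))%N.
pose h m (t : 'I_4) : R[i] := ('i ^+ t) ^+ a m * Num.conj ('i ^+ t) ^+ b m.
have termE (s : {ffun 'I_d -> 'I_4}) :
    'i ^+ s i * 'i ^+ s j * Num.conj ('i ^+ s k) * Num.conj ('i ^+ s l) = \prod_m h m (s m).
  rewrite /h /a /b; under eq_bigr do rewrite !exprD.
  rewrite !big_split /= !(prodr_exp_eq1 (fun m => 'i ^+ s m)).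
  by rewrite !(prodr_exp_eq1 (fun m => Num.conj ('i ^+ s m))) !mulrA.
rewrite (eq_bigr _ (fun s _ => termE s)) -bigA_distr_bigA /= -same_pair_count.
have hE m : \sum_(t < 4) h m t = if a m == b m then 4%:R else 0.
  by rewrite phase_char //; exact: leq_add (leq_b1 _) (leq_b1 _).
under eq_bigr do rewrite hE.
case: (boolP [forall m, a m == b m]) => [/forallP all_eq|/forallPn[m neq]].
  by under eq_bigr do rewrite all_eq; rewrite prodr_const card_ord natrX.
by rewrite (bigD1 m) //= (negbTE neq) mul0r.
Qed.

Definition phase_mx (R : rcfType) d (s : {ffun 'I_d -> 'I_4}) : 'M[R[i]]_d :=
  diag_mx (\row_m 'i ^+ s m).

Definition phase_conj (R : rcfType) d (s : {ffun 'I_d -> 'I_4}) (A : 'M[R[i]]_d) :=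
  phase_mx R s *m A *m adjmx (phase_mx R s).

Lemma phase_mx_unitary (R : rcfType) d (s : {ffun 'I_d -> 'I_4}) :
  adjmx (phase_mx R s) *m phase_mx R s = 1%:M.
Proof.
apply/matrixP => i j; rewrite adjmx_diag mul_diag_mx !mxE.
by case: (eqVneq i j) => [->|_]; rewrite ?mulr1n ?mulr0n ?mulr0 // conj_expi_mul.
Qed.

Lemma phase_conj_entry (R : rcfType) d s (A : 'M[R[i]]_d) i k :
  phase_conj s A i k = 'i ^+ s i * A i k * Num.conj ('i ^+ s k).
Proof. by rewrite /phase_conj adjmx_diag mul_diag_mx mul_mx_diag !mxE. Qed.

Lemma twirl_tens_average (R : rcfType) d (A B : 'M[R[i]]_d) :
  twirl (A *t B) = \sum_(s : {ffun 'I_d -> 'I_4})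
                     ((4 ^ d)%:R^-1 : R)%:C *: (phase_conj s A *t phase_conj s B).
Proof.
apply: tens_matrixP => i j k l; rewrite twirl_entry summxE.
set c := ((4 ^ d)%:R^-1 : R)%:C.
under eq_bigr do rewrite mxE tensmxE !phase_conj_entry.
rewrite (eq_bigr (fun s : {ffun 'I_d -> 'I_4} => c * (A i k * B j l) *
   ('i ^+ s i * 'i ^+ s j * Num.conj ('i ^+ s k) * Num.conj ('i ^+ s l)))); last first.
  by move=> s _; ring.
rewrite -mulr_sumr sum_phases tensmxE; case: ifP => _; last by rewrite mulr0.
by rewrite /c fmorphV rmorph_nat mulrAC mulVf ?mul1r // pnatr_eq0 expn_eq0.
Qed.

(** * Extremal separable DS states *)

Lemma is_DS_twirl_comb (R : rcfType) d n (v : 'I_n -> R) (A B : 'I_n -> 'M[R[i]]_d) :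
  (forall k, 0 <= v k) -> \sum_(k < n) v k = 1 ->
  (forall k, density (A k) /\ density (B k)) ->
  (forall k, 0 < v k -> DS_compatible (A k) (B k)) ->
  is_DS (\sum_(k < n) (v k)%:C *: twirl (A k *t B k)).
Proof.
move=> v_ge0 v_sum AB compat.
have psdAB k : psd (A k) /\ psd (B k) by have [[? _] [? _]] := AB k.
have v_cases k : v k = 0 \/ 0 < v k.
  by have := v_ge0 k; rewrite le_eqVlt => /orP[/eqP<-|]; [left|right].
pose q k := upper_fold (diag_prod (A k) (B k)).
exists (fun a b => \sum_(k < n) v k * q k a b); split; last first.
  rewrite -DSmx_sum; apply: eq_bigr => k _; have [psdA psdB] := psdAB k.
  by case: (v_cases k) => [->|/compat vk]; rewrite ?rmorph0 ?scale0r ?twirl_tens.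
split=> [a b _|].
  apply: sumr_ge0 => k _; have [psdA psdB] := psdAB k.
  by rewrite mulr_ge0 ?upper_fold_ge0 // => ? ?; apply: diag_prod_ge0.
rewrite -v_sum; under eq_bigr do rewrite exchange_big /=; rewrite exchange_big /=.
apply: eq_bigr => k _; under eq_bigr do rewrite -mulr_sumr.
rewrite -mulr_sumr; have [densA densB] := AB k.
by case: (v_cases k) => [->|/compat vk]; rewrite ?mul0r ?sum_upper_fold_diag_prod ?mulr1.
Qed.

Lemma separable_sum (R : rcfType) d (T : finType) (w : T -> R) (A B : T -> 'M[R[i]]_d) :
  (forall t, 0 <= w t) -> \sum_t w t = 1 -> (forall t, density (A t) /\ density (B t)) ->
  separable (\sum_t (w t)%:C *: (A t *t B t)).
Proof.
move=> w_ge0 w_sum AB.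
exists #|T|, (w \o enum_val), (A \o enum_val), (B \o enum_val).
have reindex (V : nmodType) (F : T -> V) : \sum_(k < #|T|) F (enum_val k) = \sum_t F t.
  by rewrite -big_enum_val; apply: eq_bigl => t; rewrite inE.
split=> [k|]; first exact: w_ge0.
split; first by rewrite (reindex _ w).
split=> [k|]; first exact: AB.
by rewrite (reindex _ (fun t => (w t)%:C *: (A t *t B t))).
Qed.

Lemma separable_twirl_comb (R : rcfType) d n (v : 'I_n -> R) (A B : 'I_n -> 'M[R[i]]_d) :
  (forall k, 0 <= v k) -> \sum_(k < n) v k = 1 ->
  (forall k, density (A k) /\ density (B k)) ->
  separable (\sum_(k < n) (v k)%:C *: twirl (A k *t B k)).
Proof.
move=> v_ge0 v_sum AB; pose c : R := (4 ^ d)%:R^-1.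
pose F k (s : {ffun 'I_d -> 'I_4}) := (v k * c)%:C *: (phase_conj s (A k) *t phase_conj s (B k)).
have -> : \sum_(k < n) (v k)%:C *: twirl (A k *t B k) = \sum_ks F ks.1 ks.2.
  rewrite -(pair_big xpredT xpredT F) /=; apply: eq_bigr => k _.
  rewrite twirl_tens_average scaler_sumr.
  by apply: eq_bigr => s _; rewrite scalerA -rmorphM.
apply: separable_sum => [ks||ks].
- by rewrite mulr_ge0 ?invr_ge0.
- rewrite -(pair_big xpredT xpredT (fun k s => v k * c)) /= -v_sum.
  apply: eq_bigr => k _; rewrite sumr_const card_ffun !card_ord -mulr_natr -mulrA.
  by rewrite mulVf ?mulr1 // pnatr_eq0 expn_eq0.
- have [densA densB] := AB ks.1.
  by split; apply: density_unitary_conj; rewrite ?phase_mx_unitary.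
Qed.

Lemma extremal_convex_comb (R : rcfType) m (S : 'M[R[i]]_m -> Prop) x n
    (w : 'I_n -> R) (y : 'I_n -> 'M[R[i]]_m) :
  extremal S x ->
  (forall v : 'I_n -> R, (forall k, 0 <= v k) -> \sum_(k < n) v k = 1 ->
     (forall k, 0 < v k -> 0 < w k) -> S (\sum_(k < n) (v k)%:C *: y k)) ->
  (forall k, 0 <= w k) -> \sum_(k < n) w k = 1 -> x = \sum_(k < n) (w k)%:C *: y k ->
  forall k, 0 < w k -> y k = x.
Proof.
move=> [_ x_ext] S_comb w_ge0 w_sum xE k0 wk0.
have w_split : w k0 + \sum_(k < n | k != k0) w k = 1 by rewrite -w_sum [RHS](bigD1 k0).
pose e (k : 'I_n) : R := (k == k0)%:R.
have yE : y k0 = \sum_(k < n) (e k)%:C *: y k.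
  rewrite (bigD1 k0) //= big1 => [|k /negbTE kk0]; last by rewrite /e kk0 scale0r.
  by rewrite /e eqxx scale1r addr0.
have [w1|wn1] := eqVneq (w k0) 1.
  have rest0 : \sum_(k < n | k != k0) w k = 0.
    by apply: (@addrI _ 1); rewrite addr0 -[in LHS]w1.
  have w0 (k : 'I_n) : k != k0 -> w k = 0 by apply: (psumr_eq0P _ rest0) => ? _.
  rewrite xE yE; apply: eq_bigr => k _; rewrite /e.
  by case: (eqVneq k k0) => [->|/w0->]; rewrite ?w1.
set t := w k0 in wk0 wn1 w_split.
have t_lt1 : t < 1 by rewrite lt_neqAle wn1 -w_split lerDl sumr_ge0.
have t1_gt0 : 0 < 1 - t by rewrite subr_gt0.
pose v (k : 'I_n) : R := if k == k0 then 0 else w k / (1 - t).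
pose z := \sum_(k < n) (v k)%:C *: y k.
have x_mix : x = t%:C *: y k0 + (1 - t)%:C *: z.
  rewrite xE yE !scaler_sumr -big_split; apply: eq_bigr => k _.
  rewrite /= !scalerA -scalerDl -!rmorphM -rmorphD /e /v.
  case: (eqVneq k k0) => [->|_]; first by rewrite mulr1 mulr0 addr0.
  by rewrite mulr0 add0r mulrC divfK ?lt0r_neq0.
have S_y : S (y k0).
  rewrite yE; apply: S_comb => [k||k]; rewrite /e ?ler0n //.
    by rewrite (bigD1 k0) //= eqxx big1 ?addr0 // => k /negbTE->.
  by case: (eqVneq k k0) => [->|]; rewrite ?ltxx.
have S_z : S z.
  apply: S_comb => [k||k]; rewrite /v.
  - by case: ifP => _; rewrite ?lexx // divr_ge0 // ltW.
  - rewrite (bigD1 k0) //= eqxx add0r -[RHS](divff (lt0r_neq0 t1_gt0)) -w_split addrAC subrr add0r.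
    by rewrite mulr_suml; apply: eq_bigr => k /negbTE->.
  - by case: ifP => _; rewrite ?ltxx // pmulr_lgt0 // invr_gt0.
by have [] := x_ext _ _ t S_y S_z _ x_mix; rewrite ?wk0 ?t_lt1.
Qed.

Theorem corollary1 (R : realType) (d : nat) (p : 'I_d -> 'I_d -> R) :
  (2 <= d)%N ->
  DS_coeffs p ->
  extremal (@sepDS R d) (DSmx p) ->
  forall a b : 'I_d, (a < b)%N -> p a b = 2 * Num.sqrt (p a a * p b b).
Proof.
move=> _ _ rho_ext a b ab.
have [[_ [n [w [A [B [w_ge0 [w_sum [AB rhoE]]]]]]]] _] := rho_ext.
have compat := sep_DS_compatible rhoE w_ge0 AB.
have rho_twirl : DSmx p = \sum_(k < n) (w k)%:C *: twirl (A k *t B k).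
  by rewrite -twirl_sum -rhoE twirl_DSmx.
have sum_neq0 : \sum_(k < n) w k <> 0 by rewrite w_sum; apply/eqP/oner_neq0.
have [k /andP[_ wk]] := psumr_neq0P (fun k _ => w_ge0 k) sum_neq0.
have [[psdA _] [psdB _]] := AB k.
have twirl_comb (v : 'I_n -> R) : (forall l, 0 <= v l) -> \sum_(l < n) v l = 1 ->
    (forall l, 0 < v l -> 0 < w l) -> sepDS (\sum_(l < n) (v l)%:C *: twirl (A l *t B l)).
  move=> v_ge0 v_sum supp; split; last exact: separable_twirl_comb.
  by apply: is_DS_twirl_comb => // l /supp; apply: compat.
have := extremal_convex_comb rho_ext twirl_comb w_ge0 w_sum rho_twirl wk.
have compat_k := compat k wk.
rewrite twirl_tens // => /DSmx_inj pE.
have ab_neq : (a == b) = false := ltn_eqF ab.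
rewrite -(pE a b (ltnW ab)) -(pE a a (leqnn a)) -(pE b b (leqnn b)).
rewrite /upper_fold !eqxx ab_neq.
by rewrite diag_prod_sqr // sqrtr_sqr ger0_norm ?diag_prod_ge0.
Qed.
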